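(* Let $M$ be a $3$-connected simple matroid with $r(M)\ge 3$, and let $C^*$ be a cocircuit of $M$ of rank $3$. If $C^*$ contains two elements that are not vertically contractible in $M$, then all the elements of $C^*$ that are not vertically contractible in $M$ lie in a common non-trivial line of $M$. Moreover, $C^*$ contains a vertically contractible element of $M$.
   Context: An element $x$ is vertically contractible in $M$ if $\mathrm{si}(M/x)$, the simplification of $M/x$, is $3$-connected. A non-trivial line is a rank-$2$ flat with at least three elements. *)

(* Finite matroids given by a ground set E : {set T} and a
   rank function r : {set T} -> nat (only its values on subsets of E matter). *)
From mathcomp Require Import all_boot.
Set Implicit Arguments. Unset Strict Implicit. Unset Printing Implicit Defensive.

Section Matroids.
Variable T : finType.
Implicit Types (E X Y : {set T}) (r : {set T} -> nat) (e f x : T).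

Definition is_matroid E r : Prop :=
  [/\ (forall X, X \subset E -> r X <= #|X|),
      (forall X Y, X \subset Y -> Y \subset E -> r X <= r Y) &
      (forall X Y, X \subset E -> Y \subset E ->
         r (X :|: Y) + r (X :&: Y) <= r X + r Y)].

Definition simple E r : Prop :=
  (forall e, e \in E -> r [set e] = 1) /\
  (forall e f, e \in E -> f \in E -> e != f -> r [set e; f] = 2).

Definition k_separation E r (k : nat) X : Prop :=
  [/\ X \subset E, k <= #|X|, k <= #|E :\: X| & r X + r (E :\: X) < r E + k].

Definition n_connected E r (n : nat) : Prop :=
  forall k X, 1 <= k -> k < n -> ~ k_separation E r k X.

Definition three_connected E r : Prop := n_connected E r 3.

Definition circuit E r X : Prop :=
  [/\ X \subset E, r X < #|X| &
      forall Y, Y \proper X -> r Y = #|Y|].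

Definition dual_rank E r : {set T} -> nat :=
  fun X => #|X| + r (E :\: X) - r E.

Definition cocircuit E r X : Prop := circuit E (dual_rank E r) X.

Definition flat E r X : Prop :=
  X \subset E /\ (forall e, e \in E :\: X -> r X < r (e |: X)).

Definition nontrivial_line E r L : Prop :=
  [/\ flat E r L, r L = 2 & 3 <= #|L|].

Definition contr_ground E x : {set T} := E :\ x.
Definition contr_rank r x : {set T} -> nat := fun X => r (x |: X) - r [set x].

(* canonical simplification si(N): keep non-loops that are minimal (w.r.t. the
   enumeration order of T) in their parallel class; the rank function is
   the restriction of that of N. *)
Definition si_ground E r : {set T} :=
  [set e in E | (r [set e] != 0) &&
     [forall f in E, ((f != e) && (r [set f] != 0) && (r [set e; f] == 1))
                      ==> (enum_rank e < enum_rank f)]].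

Definition vert_contractible E r x : Prop :=
  three_connected (si_ground (contr_ground E x) (contr_rank r x)) (contr_rank r x).

End Matroids.

From mathcomp Require Import all_boot zify.
From Stdlib Require Import Classical.
Set Implicit Arguments. Unset Strict Implicit. Unset Printing Implicit Defensive.

(* If x is not vertically contractible, 3-connectivity of M lifts a 1- or
   2-separation of si(M/x) to a vertical 3-separation (X, {x}, Y) with x in the
   closure of both sides.  When x lies in the cocircuit C*, whose complement is
   a hyperplane, x together with the elements of C* on either side spans at most
   a line.  Given two non-contractible x, y in C*, every element of C* off the
   line L through x and y therefore lies on the far side of both separations,
   and there is exactly one such element c.  Were c not contractible either, C*
   would be the triad {x, y, c}, and submodularity applied to the separations of
   two of its elements produces an element of the hyperplane on the line through
   them, which the separation of the third forbids.  L is non-trivial since it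
   contains either a fourth element of C* or, when C* = {x, y, c}, such an
   element of the hyperplane; and since r C* = 3, not all of C* fits on L. *)

Section Matroid.
Variables (T : finType) (E : {set T}) (r : {set T} -> nat).
Implicit Types (X Y Z S U W A B : {set T}) (e f g x y : T).
Hypothesis rM : is_matroid E r.

Lemma rk_le_card X : X \subset E -> r X <= #|X|.
Proof. by case: rM => h _ _; apply: h. Qed.

Lemma rk_mono X Y : X \subset Y -> Y \subset E -> r X <= r Y.
Proof. by case: rM => _ h _ ? ?; apply: h. Qed.

Lemma rk_submod A B S1 S2 : A \subset E -> B \subset E ->
  S1 \subset A :|: B -> S2 \subset A :&: B -> r S1 + r S2 <= r A + r B.
Proof.
move=> AE BE s1 s2.
have h : r (A :|: B) + r (A :&: B) <= r A + r B by case: rM => _ _; apply.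
apply: leq_trans h; apply: leq_add; apply: rk_mono => //.
  by rewrite subUset AE.
exact: subset_trans (subsetIl _ _) AE.
Qed.

Lemma setU1_subset S e : S \subset E -> e \in E -> e |: S \subset E.
Proof. by move=> SE eE; rewrite subUset sub1set eE. Qed.

Lemma rk_setU1 S e : S \subset E -> e \in E -> r (e |: S) <= (r S).+1.
Proof.
move=> SE eE; have eE1 : [set e] \subset E by rewrite sub1set.
have := rk_submod eE1 SE (subxx _) (sub0set _).
have := rk_le_card eE1; rewrite cards1; lia.
Qed.

Lemma closure_widen S U e : S \subset U -> U \subset E -> e \in E ->
  r (e |: S) <= r S -> r (e |: U) <= r U.
Proof.
move=> SU UE eE h; have SE := subset_trans SU UE.
have eU : e |: S :|: U = e |: U by rewrite -setUA (setUidPr SU).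
have := @rk_submod (e |: S) U (e |: U) S (setU1_subset SE eE) UE.
by rewrite eU subsetI subsetUr SU subxx => /(_ isT isT); lia.
Qed.

Lemma closure_setU S A : S \subset E -> A \subset E ->
  (forall e, e \in A -> r (e |: S) <= r S) -> r (S :|: A) <= r S.
Proof.
move=> SE; elim: {A}_.+1 {-2}A (ltnSn #|A|) => // n IH A lt AE h.
have [->|[a aA]] := set_0Vmem A; first by rewrite setU0.
have AaE : A :\ a \subset E := subset_trans (subD1set _ _) AE.
have SAa : r (S :|: (A :\ a)) <= r S.
  apply: IH => // [|e /setD1P [_ eA]]; last exact: h.
  by rewrite (cardsD1 a) aA in lt.
rewrite -(setD1K aA) setUCA; apply: leq_trans SAa.
apply: (closure_widen (subsetUl S _)) => //;
  [by rewrite subUset SE | exact: subsetP AE _ aA | exact: h].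
Qed.

Record vert_sep x X Y : Prop := VertSep {
  vs_xE : x \in E;
  vs_cover : X :|: Y = E :\ x;
  vs_disj : [disjoint X & Y];
  vs_clX : r (x |: X) = r X;
  vs_clY : r (x |: Y) = r Y;
  vs_rk : r X + r Y <= r E + 2;
  vs_rkX : 3 <= r X;
  vs_rkY : 3 <= r Y }.

Section VertSepBasic.
Variables (x : T) (X Y : {set T}).
Hypothesis V : vert_sep x X Y.

Lemma vert_sep_sym : vert_sep x Y X.
Proof.
by case: V => *; split; rewrite // 1?setUC 1?disjoint_sym 1?addnC.
Qed.

Lemma vs_XE : X \subset E.
Proof. by apply: subset_trans (subD1set E x); rewrite -(vs_cover V) subsetUl. Qed.

Lemma vs_YE : Y \subset E.
Proof. by apply: subset_trans (subD1set E x); rewrite -(vs_cover V) subsetUr. Qed.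

Lemma vs_xX : x \notin X.
Proof. by apply/negP => /(subsetP (subsetUl X Y)); rewrite (vs_cover V) !inE eqxx. Qed.

Lemma vs_xY : x \notin Y.
Proof. by apply/negP => /(subsetP (subsetUr X Y)); rewrite (vs_cover V) !inE eqxx. Qed.

Lemma vs_mem e : e \in E -> e != x -> (e \in X) || (e \in Y).
Proof. by move=> eE ex; rewrite -in_setU (vs_cover V) !inE ex. Qed.

Lemma vs_XnY e : e \in X -> e \in Y -> False.
Proof. by move=> eX; rewrite (disjointFr (vs_disj V) eX). Qed.

End VertSepBasic.

Section Simple.
Hypothesis rS : simple E r.

Lemma rk_set1 e : e \in E -> r [set e] = 1.
Proof. by case: rS => h _; apply: h. Qed.

Lemma rk_set2 e f : e \in E -> f \in E -> e != f -> r [set e; f] = 2.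
Proof. by case: rS => _; apply. Qed.

Lemma rk_set2U_le2 e f S : e \in E -> f \in E -> e != f -> S \subset E ->
  (forall g, g \in S -> r (g |: [set e; f]) <= 2) -> r ([set e; f] :|: S) <= 2.
Proof.
move=> eE fE ef SE h; have efE : [set e; f] \subset E by rewrite subUset !sub1set eE fE.
by rewrite -(rk_set2 eE fE ef); apply: closure_setU => // g gS; rewrite rk_set2 //; apply: h.
Qed.

Section Line.
Variables x y : T.
Hypotheses (xE : x \in E) (yE : y \in E) (xy : x != y).

Definition line_through := [set g in E | r [set x; y; g] <= 2].

Lemma line_through_sub : line_through \subset E.
Proof. by apply/subsetP => g; rewrite inE => /andP[]. Qed.

Lemma sub_line_through Z : x \in Z -> y \in Z -> Z \subset E -> r Z <= 2 ->
  Z \subset line_through.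
Proof.
move=> xZ yZ ZE rZ; apply/subsetP => g gZ; rewrite inE (subsetP ZE _ gZ).
apply: leq_trans rZ; apply: rk_mono ZE.
by apply/subsetP => z; rewrite !inE => /orP[/orP[]|] /eqP ->.
Qed.

Lemma line_through_xy : [set x; y] \subset line_through.
Proof.
by apply: sub_line_through; rewrite ?rk_set2 ?inE ?eqxx ?orbT // subUset !sub1set xE yE.
Qed.

Lemma mem_line_throughl : x \in line_through.
Proof. by apply: subsetP line_through_xy _ _; rewrite !inE eqxx. Qed.

Lemma mem_line_throughr : y \in line_through.
Proof. by apply: subsetP line_through_xy _ _; rewrite !inE eqxx orbT. Qed.

Lemma rk_line_through : r line_through = 2.
Proof.
have xyE : [set x; y] \subset E by rewrite subUset !sub1set xE yE.
have rL : r ([set x; y] :|: line_through) <= 2.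
  by apply: rk_set2U_le2 line_through_sub _ => // g; rewrite inE setUC => /andP[].
apply/eqP; rewrite eqn_leq -{2}(rk_set2 xE yE xy) (rk_mono line_through_xy line_through_sub).
rewrite andbT; apply: leq_trans rL; apply: rk_mono; first exact: subsetUr.
by rewrite subUset xyE line_through_sub.
Qed.

Lemma line_through_flat : flat E r line_through.
Proof.
split=> [|e]; first exact: line_through_sub.
rewrite !inE rk_line_through => /andP[eL eE]; move: eL; rewrite eE /= -ltnNge.
move/leq_trans; apply; apply: rk_mono; last exact: setU1_subset line_through_sub eE.
apply/subsetP => z; rewrite !in_setU !in_set1 => /orP[/orP[]|] /eqP ->;
  by rewrite ?eqxx ?mem_line_throughl ?mem_line_throughr ?orbT.
Qed.

Lemma rk_sub_line_through Z : Z \subset line_through -> r Z <= 2.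
Proof. by move=> ZL; rewrite -rk_line_through rk_mono ?line_through_sub. Qed.

Lemma nontrivial_line_through : 2 < #|line_through| -> nontrivial_line E r line_through.
Proof. by split; [exact: line_through_flat | exact: rk_line_through |]. Qed.

End Line.

Section Simplification.
Variable x : T.
Hypothesis xE : x \in E.
(* e and f are parallel (or equal) in M/x *)
Local Notation par e f := (r (x |: [set e; f]) <= 2).
Local Notation si := (si_ground (E :\ x) (contr_rank r x)).

Lemma setU1_subE Z : Z \subset E :\ x -> x |: Z \subset E.
Proof. by move=> ZE; apply: setU1_subset xE; apply: subset_trans ZE (subD1set _ _). Qed.

Lemma in_setD1E e : e \in E :\ x -> e \in E /\ x != e.
Proof. by rewrite !inE => /andP[ex ->]; rewrite eq_sym. Qed.

Lemma set2_subD1 e f : e \in E :\ x -> f \in E :\ x -> [set e; f] \subset E :\ x.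
Proof. by move=> eE fE; rewrite subUset !sub1set eE fE. Qed.

Lemma rk_contr_pair_ge2 e f : e \in E :\ x -> f \in E :\ x -> 2 <= r (x |: [set e; f]).
Proof.
move=> eE fE; have [eE1 xe] := in_setD1E eE.
rewrite -(rk_set2 xE eE1 xe); apply: rk_mono; last exact: setU1_subE (set2_subD1 eE fE).
by apply/subsetP => z; rewrite !inE => /orP[]->; rewrite ?orbT.
Qed.

Lemma par_sym e f : r (x |: [set e; f]) = r (x |: [set f; e]).
Proof. by rewrite [[set e; f]]setUC. Qed.

Lemma par_refl e : e \in E :\ x -> par e e.
Proof.
move=> eE; have [eE1 xe] := in_setD1E eE.
by rewrite setUid -(rk_set2 xE eE1 xe).
Qed.

Lemma par_trans e f g : e \in E :\ x -> f \in E :\ x -> g \in E :\ x ->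
  par e f -> par f g -> par e g.
Proof.
move=> eE fE gE ef fg; have [fE1 xf] := in_setD1E fE.
have egE : [set e; g] \subset E := subset_trans (set2_subD1 eE gE) (subD1set _ _).
apply: leq_trans (rk_set2U_le2 xE fE1 xf egE _).
  apply: rk_mono; first by apply/subsetP => z; rewrite !inE => /orP[|/orP[]] ->; rewrite ?orbT.
  by rewrite subUset egE andbT subUset !sub1set xE fE1.
move=> z; rewrite !inE => /orP[] /eqP ->.
  apply: leq_trans ef; apply: rk_mono; last exact: setU1_subE (set2_subD1 eE fE).
  by apply/subsetP => w; rewrite !inE => /orP[|/orP[]] ->; rewrite ?orbT.
apply: leq_trans fg; apply: rk_mono; last exact: setU1_subE (set2_subD1 fE gE).
by apply/subsetP => w; rewrite !inE => /orP[|/orP[]] ->; rewrite ?orbT.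
Qed.

Lemma contr_rank_pair_eq1 e f : e \in E :\ x -> f \in E :\ x ->
  (contr_rank r x [set e; f] == 1) = par e f.
Proof.
move=> eE fE; rewrite /contr_rank rk_set1 //; have := rk_contr_pair_ge2 eE fE.
by case: (r (x |: [set e; f])) => [|[|[|n]]].
Qed.

Lemma contr_rank_set1_neq0 e : e \in E :\ x -> contr_rank r x [set e] != 0.
Proof. by move=> eE; have [eE1 xe] := in_setD1E eE; rewrite /contr_rank rk_set1 // rk_set2. Qed.

Lemma si_ground_sub : si \subset E :\ x.
Proof. by apply/subsetP => z; rewrite inE => /andP[]. Qed.

Lemma si_ground_min s g : s \in si -> g \in E :\ x -> g != s -> par s g ->
  enum_rank s < enum_rank g.
Proof.
move=> sS gE gs sg; move: sS; rewrite inE => /andP[sE /andP[_ /forall_inP h]].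
by have := h g gE; rewrite gs contr_rank_set1_neq0 // contr_rank_pair_eq1 // sg.
Qed.

Lemma si_ground_npar s t : s \in si -> t \in si -> s != t -> ~ par s t.
Proof.
move=> sS tS st p; have ts : t != s by rewrite eq_sym.
have h1 := si_ground_min sS (subsetP si_ground_sub _ tS) ts p.
rewrite par_sym in p; have h2 := si_ground_min tS (subsetP si_ground_sub _ sS) st p.
by have := ltn_trans h1 h2; rewrite ltnn.
Qed.

Lemma si_ground_rep e : e \in E :\ x -> exists2 s, s \in si & par e s.
Proof.
move=> eE; pose P := [pred f | (f \in E :\ x) && par e f].
have eP : P e by rewrite /P /= eE par_refl.
have [s /andP[sE es] smin] := @arg_minnP _ e P (fun f => enum_rank f) eP.
exists s => //; rewrite inE sE contr_rank_set1_neq0 //=.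
apply/forall_inP => g gE; apply/implyP => /andP[/andP[gs _]].
rewrite contr_rank_pair_eq1 // => sg.
have := smin g; rewrite /P /= gE (par_trans eE sE gE es sg) => /(_ isT).
rewrite leq_eqVlt => /orP[/eqP|//] /val_inj /enum_rank_inj gs'.
by move: gs; rewrite gs' eqxx.
Qed.

Lemma rk_par_cover Z W : Z \subset E :\ x -> W \subset E :\ x ->
  (forall e, e \in W -> exists2 s, s \in Z & par e s) -> r (x |: W) <= r (x |: Z).
Proof.
move=> ZE WE h; have xZE := setU1_subE ZE; have WE1 := subset_trans WE (subD1set _ _).
apply: leq_trans (_ : r ((x |: Z) :|: W) <= _).
  by apply: rk_mono; [apply: setSU; apply: subsetUl | rewrite subUset xZE].
apply: closure_setU => // e eW; have [s sZ es] := h e eW.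
have [sE1 xs] := in_setD1E (subsetP ZE _ sZ); have [eE1 _] := in_setD1E (subsetP WE _ eW).
apply: (@closure_widen (x |: [set s])) => //; first by apply: setUS; rewrite sub1set.
rewrite rk_set2 //; apply: leq_trans es; apply: rk_mono.
  by apply/subsetP => w; rewrite !inE => /orP[|/orP[]] ->; rewrite ?orbT.
exact: setU1_subE (set2_subD1 (subsetP WE _ eW) (subsetP ZE _ sZ)).
Qed.

Lemma rk_si_ground_lower Z k : Z \subset si -> 1 <= k <= 2 -> k <= #|Z| ->
  k.+1 <= r (x |: Z).
Proof.
move=> ZS; have ZE := subset_trans ZS si_ground_sub.
case: k => [|[|[|//]]] // _ kZ.
  have [s sZ] := card_gt0P kZ; have [sE1 xs] := in_setD1E (subsetP ZE _ sZ).
  rewrite -(rk_set2 xE sE1 xs); apply: rk_mono (setU1_subE ZE).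
  by apply: setUS; rewrite sub1set.
have [s [t [sZ tZ st]]] := card_gt1P kZ.
have /negP := si_ground_npar (subsetP ZS _ sZ) (subsetP ZS _ tZ) st.
rewrite -ltnNge => /leq_trans; apply; apply: rk_mono (setU1_subE ZE).
by apply: setUS; rewrite subUset !sub1set sZ tZ.
Qed.

Definition par_closure Z := [set e in E :\ x | [exists s in Z, par e s]].

Lemma par_closure_sub Z : par_closure Z \subset E :\ x.
Proof. by apply/subsetP => e; rewrite inE => /andP[]. Qed.

Lemma sub_par_closure Z : Z \subset E :\ x -> Z \subset par_closure Z.
Proof.
move=> ZE; apply/subsetP => s sZ; rewrite inE (subsetP ZE _ sZ).
by apply/exists_inP; exists s => //; apply: par_refl (subsetP ZE _ sZ).
Qed.

Lemma rk_par_closure Z : Z \subset E :\ x -> r (x |: par_closure Z) <= r (x |: Z).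
Proof.
move=> ZE; apply: rk_par_cover => // [|e]; first exact: par_closure_sub.
by rewrite inE => /andP[_ /exists_inP[s]]; exists s.
Qed.

Lemma si_setD_par_closure Z : Z \subset si -> si :\: Z \subset (E :\ x) :\: par_closure Z.
Proof.
move=> ZS; apply/subsetP => s /setDP [sS sZ]; have sE := subsetP si_ground_sub _ sS.
rewrite inE sE andbT inE sE /=; apply/exists_inP => -[t tZ p].
by apply: (si_ground_npar sS (subsetP ZS _ tZ) _ p); apply: contraNneq sZ => ->.
Qed.

Lemma rk_compl_par_closure Z : Z \subset si ->
  r (x |: ((E :\ x) :\: par_closure Z)) <= r (x |: (si :\: Z)).
Proof.
move=> ZS; have SZE : si :\: Z \subset E :\ x := subset_trans (subsetDl _ _) si_ground_sub.
apply: rk_par_cover SZE (subsetDl _ _) _ => e.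
rewrite inE => /andP[eNZ eE]; have [s sS es] := si_ground_rep eE.
exists s => //; rewrite inE sS andbT.
by apply: contra eNZ => sZ; rewrite inE eE; apply/exists_inP; exists s.
Qed.

End Simplification.

Lemma line_throughC x y : line_through x y = line_through y x.
Proof. by apply/setP => g; rewrite !inE [[set x; y]]setUC. Qed.

Lemma line_through_subl x y g : x \in E -> y \in E -> x != y ->
  g \in line_through x y -> x != g -> line_through x g \subset line_through x y.
Proof.
move=> xE yE xy gL xg; have gE := subsetP (line_through_sub x y) _ gL.
have xygE : [set x; y; g] \subset E by rewrite !subUset !sub1set xE yE gE.
have yxg : y \in line_through x g.
  have : [set x; y; g] \subset line_through x g.
    apply: sub_line_through => //; rewrite ?inE ?eqxx ?orbT //.
    by move: gL; rewrite inE => /andP[].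
  by move/subsetP; apply; rewrite !inE eqxx orbT.
apply/subsetP => z zL; have zE := subsetP (line_through_sub x g) _ zL.
rewrite inE zE /=; apply: (rk_sub_line_through xE gE xg).
apply/subsetP => u; rewrite !in_setU !in_set1 => /orP[/orP[]|] /eqP ->;
  by rewrite ?yxg ?zL ?(mem_line_throughl xE gE xg).
Qed.

Section ThreeConnected.
Hypothesis r3 : three_connected E r.

Lemma rk_sep1 S : S \subset E -> 0 < #|S| -> 0 < #|E :\: S| ->
  r E < r S + r (E :\: S).
Proof.
move=> SE c1 c2; rewrite ltnNge; apply/negP => h.
by apply: (r3 (k:=1) (X:=S)) => //; split; rewrite // addn1 ltnS.
Qed.

Lemma rk_sep2 S : S \subset E -> 1 < #|S| -> 1 < #|E :\: S| ->
  r E + 2 <= r S + r (E :\: S).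
Proof.
move=> SE c1 c2; rewrite leqNgt; apply/negP => h.
by apply: (r3 (k:=2) (X:=S)) => //; split.
Qed.

Section Partition.
Variables (x : T) (X Y : {set T}).
Hypotheses (xE : x \in E) (cover : X :|: Y = E :\ x) (disj : [disjoint X & Y]).

Lemma partition_subE : X \subset E.
Proof. by apply: subset_trans (subD1set E x); rewrite -cover subsetUl. Qed.

Lemma partition_compl : E :\: X = x |: Y.
Proof.
apply/setP => z; rewrite !inE; case: (eqVneq z x) => [->|zx] /=.
  by rewrite xE andbT; apply/negP => /(subsetP (subsetUl X Y)); rewrite cover !inE eqxx.
have := congr1 (fun A => z \in A) cover; rewrite !inE zx /= => <-.
by case zX: (z \in X); rewrite //= (disjointFr disj zX).
Qed.

Lemma partition_side_closed k : 1 <= k <= 2 -> k.+1 <= r (x |: X) -> 2 <= r (x |: Y) ->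
  r (x |: X) + r (x |: Y) <= r E + k -> r (x |: X) = r X /\ 1 < #|X|.
Proof.
move=> /andP[k1 k2] lX lY sm; have XE := partition_subE.
have YxE : x |: Y \subset E by rewrite -partition_compl subsetDl.
have cEX : 1 < #|E :\: X|.
  by rewrite partition_compl; apply: leq_trans lY (rk_le_card YxE).
have rX : r X <= r (x |: X) <= (r X).+1.
  by rewrite rk_setU1 // rk_mono ?subsetUr ?setU1_subset.
have [cX|cX] := ltnP 1 #|X|.
  have := rk_sep2 XE cX cEX; rewrite partition_compl; split => //; lia.
exfalso; have X0 : 0 < #|X|.
  rewrite card_gt0; apply/negP => /eqP X0; move: lX; rewrite X0 setU0 rk_set1 //; lia.
have := rk_sep1 XE X0 (ltnW cEX); have := rk_le_card XE; rewrite partition_compl; lia.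
Qed.

End Partition.

Lemma vert_sep_of_partition x X Y k : x \in E -> X :|: Y = E :\ x -> [disjoint X & Y] ->
  1 <= k <= 2 -> k.+1 <= r (x |: X) -> k.+1 <= r (x |: Y) ->
  r (x |: X) + r (x |: Y) <= r E + k -> vert_sep x X Y.
Proof.
move=> xE cov dis k12 lX lY sm; have /andP[k1 _] := k12.
have covC : Y :|: X = E :\ x by rewrite setUC.
have disC : [disjoint Y & X] by rewrite disjoint_sym.
have [eX cX] := partition_side_closed xE cov dis k12 lX (leq_ltn_trans k1 lY) sm.
have [eY cY] : r (x |: Y) = r Y /\ 1 < #|Y|.
  by apply: (partition_side_closed xE covC disC k12 lY (leq_ltn_trans k1 lX)); rewrite addnC.
have cEX : 1 < #|E :\: X|.
  by rewrite (partition_compl xE cov dis); apply: leq_trans cY (subset_leq_card (subsetUr _ _)).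
have := rk_sep2 (partition_subE cov) cX cEX.
rewrite (partition_compl xE cov dis) eX eY in sm lX lY * => h.
by split => //; lia.
Qed.

(* A k-separation of si(M/x), k <= 2, is lifted to a partition of E - x by
   attaching every element of M/x to the side containing its parallel class. *)
Lemma not_vert_contractible_sep x : x \in E -> ~ vert_contractible E r x ->
  exists X Y, vert_sep x X Y.
Proof.
move=> xE nvc; set S := si_ground (E :\ x) (contr_rank r x).
have [k [X [k12 [XS kX kSX ksum]]]] :
    exists k X, 1 <= k <= 2 /\ k_separation S (contr_rank r x) k X.
  apply: NNPP => h; apply: nvc => k X k1 k3 ks; apply: h; exists k, X.
  by rewrite k1 -ltnS.
have SE : S \subset E :\ x := si_ground_sub x.
have XE : X \subset E :\ x := subset_trans XS SE.
have SXE : S :\: X \subset E :\ x := subset_trans (subsetDl _ _) SE.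
set Xh := par_closure x X; set Yh := (E :\ x) :\: Xh.
have XhE : Xh \subset E :\ x := par_closure_sub x X.
have cover : Xh :|: Yh = E :\ x by rewrite /Yh -{2}(setID (E :\ x) Xh) (setIidPr XhE).
have disj : [disjoint Xh & Yh] by rewrite /Yh disjoints_subset setCD subsetUr.
have lX : k.+1 <= r (x |: Xh).
  apply: leq_trans (rk_si_ground_lower xE XS k12 kX) _.
  exact: rk_mono (setUS _ (sub_par_closure xE XE)) (setU1_subE xE XhE).
have lY : k.+1 <= r (x |: Yh).
  apply: leq_trans (rk_si_ground_lower xE (subsetDl S X) k12 kSX) _.
  exact: rk_mono (setUS _ (si_setD_par_closure xE XS)) (setU1_subE xE (subsetDl _ _)).
have rXh : r (x |: Xh) <= r (x |: X) := rk_par_closure xE XE.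
have rYh : r (x |: Yh) <= r (x |: (S :\: X)) := rk_compl_par_closure xE XS.
have rSE : r (x |: S) <= r E by apply: rk_mono (setU1_subE xE SE) (subxx _).
have ge1 Z : Z \subset E :\ x -> 1 <= r (x |: Z).
  by move=> ZE; rewrite -(rk_set1 xE) rk_mono ?setU1_subE // subsetUl.
have := ge1 _ XE; have := ge1 _ SXE; have := ge1 _ SE.
rewrite /contr_rank rk_set1 // in ksum => g1 g2 g3.
exists Xh, Yh; apply: (vert_sep_of_partition xE cover disj k12) => //; lia.
Qed.

Lemma not_vert_contractible_sep_with x w : x \in E -> w \in E -> w != x ->
  ~ vert_contractible E r x -> exists X Y, vert_sep x X Y /\ w \in X.
Proof.
move=> xE wE wx nx; have [X [Y V]] := not_vert_contractible_sep xE nx.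
case/orP: (vs_mem V wE wx) => wX; first by exists X, Y.
by exists Y, X; split => //; apply: vert_sep_sym.
Qed.

Section Cocircuit.
Variable Cs : {set T}.
Hypotheses (HC : cocircuit E r Cs) (HC3 : r Cs = 3).
Local Notation H := (E :\: Cs).

Lemma cocircuit_subE : Cs \subset E.
Proof. by case: HC. Qed.

Lemma card_cocircuit_gt2 : 2 < #|Cs|.
Proof. by have := rk_le_card cocircuit_subE; rewrite HC3. Qed.

Lemma rk_hyperplane_lt : r H < r E.
Proof. by case: HC => _ h _; move: h; rewrite /dual_rank; lia. Qed.

Lemma rk_hyperplane_setU1 c : c \in Cs -> r (c |: H) = r E.
Proof.
move=> cCs; have cE := subsetP cocircuit_subE _ cCs; case: HC => _ _ h.
have := h (Cs :\ c) (properD1 cCs); rewrite /dual_rank.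
have -> : E :\: (Cs :\ c) = c |: H.
  by apply/setP => z; rewrite !inE; case: (eqVneq z c) => [->|] //=; rewrite cE.
have := rk_mono (setU1_subset (subsetDl E Cs) cE) (subxx E).
have : 1 < #|Cs :\ c| by have := card_cocircuit_gt2; rewrite (cardsD1 c) cCs.
lia.
Qed.

Lemma rk_setU1_hyperplane Z c : Z \subset H -> c \in Cs -> r (c |: Z) = (r Z).+1.
Proof.
move=> ZH cCs; have cE := subsetP cocircuit_subE _ cCs.
have ZE := subset_trans ZH (subsetDl E Cs).
apply/eqP; rewrite eqn_leq rk_setU1 //=.
have := @rk_submod (c |: Z) H (c |: H) Z (setU1_subset ZE cE) (subsetDl E Cs).
rewrite -setUA (setUidPr ZH) subsetI subsetUr ZH subxx rk_hyperplane_setU1 //.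
by have := rk_hyperplane_lt; move=> h1 /(_ isT isT); lia.
Qed.

Lemma vert_sep_cocircuit_line x X Y : vert_sep x X Y -> x \in Cs ->
  r (x |: (X :&: Cs)) <= 2.
Proof.
move=> V xCs; have xE := subsetP cocircuit_subE _ xCs.
set W := Y :\: Cs.
have WH : W \subset H by apply: setSD; apply: vs_YE V.
have WE : W \subset E := subset_trans WH (subsetDl E Cs).
have h1 : r (E :\: W) + r (x |: (X :&: Cs)) <= r (x |: X) + r Cs.
  apply: rk_submod.
  - exact: setU1_subset (vs_XE V) xE.
  - exact: cocircuit_subE.
  - apply/subsetP => z; rewrite !inE => /andP[zW zE].
    case: (eqVneq z x) => //= zx.
    case/orP: (vs_mem V zE zx) => [->//|zY]; move: zW; rewrite zY /=.
    by rewrite andbT negbK orbC => ->.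
  - apply/subsetP => z; rewrite !inE => /orP[/eqP->|/andP[->->]]; rewrite ?orbT //.
    by rewrite eqxx xCs.
have h2 : r W + 1 <= r Y.
  rewrite -(vs_clY V) addn1 -(rk_setU1_hyperplane WH xCs); apply: rk_mono.
    by apply: setUS; apply: subsetDl.
  exact: setU1_subset (vs_YE V) xE.
have c3 : 1 < #|E :\: W|.
  apply: leq_trans (ltnW card_cocircuit_gt2) (subset_leq_card _).
  by apply/subsetP => z zCs; rewrite !inE zCs (subsetP cocircuit_subE).
have := vs_rk V; have := vs_rkY V; rewrite (vs_clX V) HC3 in h1.
have [cW|cW] := ltnP 1 #|W|; first by have := rk_sep2 WE cW c3; lia.
have h3 : r E <= r (E :\: W).
  have [->|W0] := eqVneq W set0; first by rewrite setD0.
  have := rk_sep1 WE; rewrite card_gt0 W0 => /(_ isT (ltnW c3)).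
  by have := rk_le_card WE; lia.
lia.
Qed.

Lemma vert_sep_cocircuit_sub_line x X Y a b : vert_sep x X Y -> x \in Cs ->
  a \in x |: (X :&: Cs) -> b \in x |: (X :&: Cs) -> a != b ->
  x |: (X :&: Cs) \subset line_through a b.
Proof.
move=> V xCs aZ bZ ab.
have ZE : x |: (X :&: Cs) \subset E.
  by apply: setU1_subset (vs_xE V); apply: subset_trans (subsetIr _ _) cocircuit_subE.
by apply: sub_line_through => //; apply: vert_sep_cocircuit_line V xCs.
Qed.

Lemma vert_sep_cocircuit_not_cl x X Y e : vert_sep x X Y -> e \in X -> e \in Cs ->
  X :\ e \subset H -> r (x |: Y) < r (e |: (x |: Y)).
Proof.
move=> V eX eCs XH; rewrite ltnNge; apply/negP => h.
have xE := vs_xE V; have eE := subsetP (vs_XE V) _ eX.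
have XeE : X :\ e \subset E := subset_trans XH (subsetDl E Cs).
have rX : r X = (r (X :\ e)).+1 by rewrite -{1}(setD1K eX) rk_setU1_hyperplane.
have c1 : 1 < #|X :\ e| by apply: leq_trans (rk_le_card XeE); have := vs_rkX V; lia.
have c2 : 1 < #|E :\: (X :\ e)|.
  apply/card_gt1P; exists x, e; split.
  - by rewrite !inE xE andbT negb_and (negbTE (vs_xX V)) orbT.
  - by rewrite !inE eE andbT eqxx.
  - by apply: contraNneq (vs_xX V) => ->.
have := rk_sep2 XeE c1 c2.
have : r (E :\: (X :\ e)) <= r (e |: (x |: Y)).
  apply: rk_mono; last by do 2!apply: setU1_subset => //; exact: vs_YE V.
  apply/subsetP => z; rewrite !inE => /andP[zX zE].
  case: (eqVneq z x) => [->|zx]; rewrite ?eqxx ?orbT //=.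
  case/orP: (vs_mem V zE zx) => [zX'|->]; rewrite ?orbT //.
  by move: zX; rewrite zX' andbT negbK => ->.
have := vs_rk V; rewrite -(vs_clY V) in h *; lia.
Qed.

Lemma vert_sep_triad_sides x y c X Y : Cs \subset [set x; y; c] ->
  vert_sep x X Y -> y \in X -> c \in Y -> X :\ y \subset H /\ Y :\ c \subset H.
Proof.
move=> Csub V yX cY.
have inCs z : z \in Cs -> [\/ z = x, z = y | z = c].
  by move/(subsetP Csub); rewrite !inE => /orP[/orP[]|] /eqP ->; constructor.
split; apply/subsetP => z /setD1P [zNe zXY]; rewrite inE andbC.
- rewrite (subsetP (vs_XE V) _ zXY) /=; apply/negP => /inCs [zx|zy|zc].
  + by move: (vs_xX V); rewrite -zx zXY.
  + by move: zNe; rewrite zy eqxx.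
  + by apply: (vs_XnY V zXY); rewrite zc.
- rewrite (subsetP (vs_YE V) _ zXY) /=; apply/negP => /inCs [zx|zy|zc].
  + by move: (vs_xY V); rewrite -zx zXY.
  + by apply: (vs_XnY V yX); rewrite -zy.
  + by move: zNe; rewrite zc eqxx.
Qed.

Lemma vert_sep_triad_no_line x y c X Y w : x \in Cs -> y \in Cs -> c \in Cs ->
  Cs \subset [set x; y; c] -> vert_sep x X Y -> y \in X -> c \in Y ->
  w \in E :\: Cs -> 2 < r [set y; c; w].
Proof.
move=> xCs yCs cCs Csub V yX cY /setDP [wE wCs].
have [XH YH] := vert_sep_triad_sides Csub V yX cY.
have yE := subsetP cocircuit_subE _ yCs; have cE := subsetP cocircuit_subE _ cCs.
have wx : w != x by apply: contraNneq wCs => ->.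
have yw : y != w by apply: contraTneq yCs => ->.
have cw : c != w by apply: contraTneq cCs => ->.
rewrite ltnNge; apply/negP => line.
have le2 A : A \subset [set y; c; w] -> r A <= 2.
  by move=> Asub; apply: leq_trans line; apply: rk_mono Asub _; rewrite !subUset !sub1set yE cE wE.
case/orP: (vs_mem V wE wx) => wXY.
- have := vert_sep_cocircuit_not_cl (vert_sep_sym V) cY cCs YH; apply/negP; rewrite -leqNgt.
  apply: (@closure_widen [set y; w] _ _ _ (setU1_subset (vs_XE V) (vs_xE V)) cE).
    by rewrite !subUset !sub1set !inE yX wXY !orbT.
  rewrite rk_set2 //; apply: le2.
  by apply/subsetP => z; rewrite !inE => /orP[|/orP[]] ->; rewrite ?orbT.
- have := vert_sep_cocircuit_not_cl V yX yCs XH; apply/negP; rewrite -leqNgt.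
  apply: (@closure_widen [set c; w] _ _ _ (setU1_subset (vs_YE V) (vs_xE V)) yE).
    by rewrite !subUset !sub1set !inE cY wXY !orbT.
  rewrite rk_set2 //; apply: le2.
  by apply/subsetP => z; rewrite !inE => /orP[|/orP[]] ->; rewrite ?orbT.
Qed.

Section Triad.
Variables (x y c : T) (X Y U V : {set T}).
Hypotheses (xCs : x \in Cs) (yCs : y \in Cs) (cCs : c \in Cs).
Hypothesis Csub : Cs \subset [set x; y; c].
Hypotheses (Vx : vert_sep x X Y) (yX : y \in X) (cY : c \in Y).
Hypotheses (Vy : vert_sep y U V) (xU : x \in U) (cV : c \in V).

Let xE := subsetP cocircuit_subE _ xCs.
Let yE := subsetP cocircuit_subE _ yCs.
Let cE := subsetP cocircuit_subE _ cCs.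
Let xy : x != y. Proof. by apply: contraTneq xU => ->; apply: vs_xX Vy. Qed.

Let Csub_yx : Cs \subset [set y; x; c].
Proof. by apply: subset_trans Csub _; rewrite !subUset !sub1set !inE !eqxx !orbT. Qed.

Lemma triad_meet_neq0 : exists w, w \in X :&: U.
Proof.
have [UH _] := vert_sep_triad_sides Csub_yx Vy xU cV.
have xNcl := vert_sep_cocircuit_not_cl Vy xU xCs UH.
apply: NNPP => a0; move: xNcl; apply/negP; rewrite -leqNgt.
have XyV : X \subset y |: V.
  apply/subsetP => z zX; rewrite !inE; have [->|zy] := eqVneq z y; first by [].
  case/orP: (vs_mem Vy (subsetP (vs_XE Vx) _ zX) zy) => // zU.
  by case: a0; exists z; rewrite inE zX.
apply: closure_widen XyV (setU1_subset (vs_YE Vy) yE) xE _.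
by rewrite (vs_clX Vx).
Qed.

Lemma triad_YV_extra : exists2 d, d \in Y :&: V & d != c.
Proof.
have [_ VH] := vert_sep_triad_sides Csub_yx Vy xU cV.
have [_ YH] := vert_sep_triad_sides Csub Vx yX cY.
have cNcl := vert_sep_cocircuit_not_cl (vert_sep_sym Vx) cY cCs YH.
apply: NNPP => hd; move: cNcl; apply/negP; rewrite -leqNgt.
set V' := V :\ c.
have V'E : V' \subset E := subset_trans VH (subsetDl E Cs).
have V'X : V' \subset X.
  apply/subsetP => z /setD1P [zc zV].
  have zx : z != x by apply: contraTneq zV => ->; apply/negP => xV; apply: (vs_XnY Vy xU xV).
  case/orP: (vs_mem Vx (subsetP (vs_YE Vy) _ zV) zx) => // zY.
  by case: hd; exists z; rewrite ?inE ?zY.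
have cl_c : r (c |: (y |: V')) <= r (y |: V').
  have h1 : r (c |: (y |: V')) <= r (y |: V).
    apply: rk_mono; last exact: setU1_subset (vs_YE Vy) yE.
    by rewrite setUCA; apply: setUS; rewrite subUset sub1set cV subD1set.
  have h2 : r V <= r (c |: V') by rewrite setD1K.
  rewrite (vs_clY Vy) (rk_setU1_hyperplane VH cCs) in h1 h2.
  by rewrite (rk_setU1_hyperplane VH yCs); apply: leq_trans h1 h2.
apply: closure_widen cl_c => //; last exact: setU1_subset (vs_XE Vx) xE.
by rewrite subUset sub1set !inE yX orbT (subset_trans V'X (subsetUr _ _)).
Qed.

Lemma triad_rk_compl_meet : r (E :\: (X :&: U)) <= r (Y :|: V).
Proof.
have YVE : Y :|: V \subset E by rewrite subUset (vs_YE Vx) (vs_YE Vy).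
have cl_y : r (y |: (Y :|: V)) <= r (Y :|: V).
  by apply: (@closure_widen V) => //; [exact: subsetUr | rewrite (vs_clY Vy)].
have cl_x : r (x |: (y |: (Y :|: V))) <= r (y |: (Y :|: V)).
  apply: (@closure_widen Y) => //; last by rewrite (vs_clY Vx).
  - by rewrite setUCA subsetUl.
  - exact: setU1_subset.
apply: leq_trans cl_y; apply: leq_trans cl_x.
apply: rk_mono; last exact: setU1_subset (setU1_subset YVE yE) xE.
apply/subsetP => z; rewrite !inE => /andP[za zE].
have [->|zx] := eqVneq z x; first by [].
have [->|zy] := eqVneq z y; first by rewrite orbT.
case/orP: (vs_mem Vx zE zx) => [zX|->]; last by rewrite !orbT.
move: za; rewrite zX /= => zU.
by case/orP: (vs_mem Vy zE zy) => [zU'|->]; [rewrite zU' in zU | rewrite !orbT].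
Qed.

Lemma triad_rk_meet : r (x |: (y |: (X :&: U))) + r (E :\: (X :&: U)) <= r E + 2.
Proof.
have [d dYV dc] := triad_YV_extra.
have PE : x |: X \subset E := setU1_subset (vs_XE Vx) xE.
have QE : y |: U \subset E := setU1_subset (vs_XE Vy) yE.
have s1 : r ((x |: X) :|: (y |: U)) + r (x |: (y |: (X :&: U))) <= r (x |: X) + r (y |: U).
  apply: rk_submod => //; apply/subsetP => z; rewrite !inE.
  by move=> /orP[/eqP->|/orP[/eqP->|/andP[zX zU]]]; rewrite ?eqxx ?xU ?yX ?zX ?zU ?orbT.
have s2 : r (Y :|: V) + r (Y :&: V) <= r Y + r V.
  by apply: rk_submod; rewrite ?subxx ?(vs_YE Vx) ?(vs_YE Vy).
have s3 : r E + 2 <= r (Y :&: V) + r (E :\: (Y :&: V)).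
  apply: rk_sep2; first exact: subset_trans (subsetIl _ _) (vs_YE Vx).
    by apply/card_gt1P; exists c, d; rewrite inE cY cV eq_sym.
  apply/card_gt1P; exists x, y; rewrite !inE xE yE (negbTE (vs_xY Vx)) (negbTE (vs_xY Vy)).
  by rewrite andbF.
have s4 : r (E :\: (Y :&: V)) <= r ((x |: X) :|: (y |: U)).
  apply: rk_mono; last by rewrite subUset PE QE.
  apply/subsetP => z; rewrite !inE => /andP[zYV zE].
  have [->|zx] := eqVneq z x; first by [].
  case/orP: (vs_mem Vx zE zx) => [->//|zY]; rewrite orbC /=.
  move: zYV; rewrite zY /= => zV.
  have [->|zy] := eqVneq z y; first by [].
  by case/orP: (vs_mem Vy zE zy) => [->//|]; rewrite (negbTE zV).
have := triad_rk_compl_meet; have := vs_rk Vx; have := vs_rk Vy.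
rewrite (vs_clX Vx) (vs_clX Vy) in s1 s4 => h1 h2 h3.
by clear -s1 s2 s3 s4 h1 h2 h3; lia.
Qed.

Lemma triad_line : exists2 w, w \in E :\: Cs & r [set x; y; w] <= 2.
Proof.
have key := triad_rk_meet; have [w wa] := triad_meet_neq0.
set a := X :&: U in key wa *.
have [XH _] := vert_sep_triad_sides Csub Vx yX cY.
have aH : a \subset E :\: Cs.
  apply: subset_trans XH; apply/subsetP => z; rewrite !inE => /andP[zX zU].
  by rewrite zX andbT; apply: contraTneq zU => ->; apply: vs_xX Vy.
have aE : a \subset E := subset_trans aH (subsetDl E Cs).
have xa : x \notin a by rewrite inE (negbTE (vs_xX Vx)).
have rxya : r a < r (x |: (y |: a)).
  rewrite -(rk_setU1_hyperplane aH xCs); apply: rk_mono.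
    by rewrite setUCA subsetUr.
  exact: setU1_subset (setU1_subset aE yE) xE.
have a1 : #|a| <= 1.
  rewrite leqNgt; apply/negP => a2.
  have : 1 < #|E :\: a|.
    apply/card_gt1P; exists x, y; rewrite !inE xE yE (negbTE (vs_xX Vx)) /= andbT.
    by rewrite (negbTE (vs_xX Vy)) andbF.
  by move/(rk_sep2 aE a2); clear -key rxya; lia.
have Ea : 0 < #|E :\: a| by apply/card_gt0P; exists x; rewrite inE xa xE.
have aw : a = [set w] by apply/eqP; rewrite eq_sym eqEcard sub1set wa cards1 a1.
exists w; first exact: subsetP aH _ wa.
have a0 : 0 < #|a| by rewrite aw cards1.
have := rk_sep1 aE a0 Ea; have := rk_le_card aE.
rewrite -[[set x; y; w]]setUA -aw => h1 h2.
by clear -key a1 h1 h2; lia.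
Qed.

End Triad.

Section TwoNonContractible.
Variables (x y : T) (X Y U V : {set T}).
Hypotheses (xCs : x \in Cs) (yCs : y \in Cs).
Hypotheses (Vx : vert_sep x X Y) (yX : y \in X) (Vy : vert_sep y U V) (xU : x \in U).
Local Notation L := (line_through x y).

Let xE := subsetP cocircuit_subE _ xCs.
Let yE := subsetP cocircuit_subE _ yCs.
Let xy : x != y. Proof. by apply: contraTneq xU => ->; apply: vs_xX Vy. Qed.
Let yx : y != x. Proof. by rewrite eq_sym. Qed.

Lemma off_line_sides g : g \in Cs -> g \notin L -> g \in Y /\ g \in V.
Proof.
move=> gCs gL; have gE := subsetP cocircuit_subE _ gCs.
have gx : g != x by apply: contraNneq gL => ->; apply: mem_line_throughl.
have gy : g != y by apply: contraNneq gL => ->; apply: mem_line_throughr.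
split.
- case/orP: (vs_mem Vx gE gx) => // gX; case/negP: gL.
  apply: subsetP (vert_sep_cocircuit_sub_line Vx xCs _ _ xy) _ _;
  by rewrite ?inE ?eqxx ?yX ?gX ?yCs ?gCs ?orbT.
- case/orP: (vs_mem Vy gE gy) => // gU; case/negP: gL; rewrite line_throughC.
  apply: subsetP (vert_sep_cocircuit_sub_line Vy yCs _ _ yx) _ _;
  by rewrite ?inE ?eqxx ?xU ?gU ?xCs ?gCs ?orbT.
Qed.

Lemma exists_off_line : exists2 c, c \in Cs & c \notin L.
Proof.
have [CL|/subsetPn [c cCs cL]] := boolP (Cs \subset L); last by exists c.
by have := rk_sub_line_through xE yE xy CL; rewrite HC3.
Qed.

Lemma off_line_unique g c : g \in Cs -> g \notin L -> c \in Cs -> c \notin L -> g = c.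
Proof.
move=> gCs gL cCs cL; apply/eqP; move: (gL); apply: contraNT => gc.
have [gY gV] := off_line_sides gCs gL; have [cY cV] := off_line_sides cCs cL.
have gE := subsetP cocircuit_subE _ gCs; have cE := subsetP cocircuit_subE _ cCs.
have xL : x \in line_through g c.
  apply: subsetP (vert_sep_cocircuit_sub_line (vert_sep_sym Vx) xCs _ _ gc) _ _;
  by rewrite ?inE ?eqxx ?gY ?cY ?gCs ?cCs ?orbT.
have yL : y \in line_through g c.
  apply: subsetP (vert_sep_cocircuit_sub_line (vert_sep_sym Vy) yCs _ _ gc) _ _;
  by rewrite ?inE ?eqxx ?gV ?cV ?gCs ?cCs ?orbT.
rewrite inE gE /=; apply: (rk_sub_line_through gE cE gc).
apply/subsetP => u; rewrite !in_setU !in_set1 => /orP[/orP[]|] /eqP ->;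
  by rewrite ?xL ?yL ?(mem_line_throughl gE cE gc).
Qed.

Lemma off_line_sep_triad c S0 T0 : c \in Cs -> c \notin L ->
  vert_sep c S0 T0 -> x \in S0 -> y \in T0 /\ Cs \subset [set x; y; c].
Proof.
move=> cCs cL Vc xS0; have cE := subsetP cocircuit_subE _ cCs.
have yT0 : y \in T0.
  have yc : y != c by apply: contraNneq cL => <-; apply: mem_line_throughr.
  case/orP: (vs_mem Vc yE yc) => // yS0; case/negP: cL.
  apply: subsetP (vert_sep_cocircuit_sub_line Vc cCs _ _ xy) _ (setU11 _ _);
  by rewrite !inE ?xS0 ?yS0 ?xCs ?yCs ?orbT.
split => //; apply/subsetP => g gCs; rewrite !inE.
have [//|gx] := eqVneq g x; have [//|gy] := eqVneq g y; have [//|gc] := eqVneq g c.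
exfalso; have gE := subsetP cocircuit_subE _ gCs.
have gL : g \in L by apply: contraNT gc => gL; rewrite (off_line_unique gCs gL cCs cL).
have xg : x != g by rewrite eq_sym.
have yg : y != g by rewrite eq_sym.
case/negP: cL; case/orP: (vs_mem Vc gE gc) => gST.
- apply: subsetP (line_through_subl xE yE xy gL xg) _ _.
  apply: subsetP (vert_sep_cocircuit_sub_line Vc cCs _ _ xg) _ (setU11 _ _);
  by rewrite ?inE ?eqxx ?xS0 ?gST ?xCs ?gCs ?orbT.
- rewrite line_throughC in gL *.
  apply: subsetP (line_through_subl yE xE yx gL yg) _ _.
  apply: subsetP (vert_sep_cocircuit_sub_line (vert_sep_sym Vc) cCs _ _ yg) _ (setU11 _ _);
  by rewrite ?inE ?eqxx ?yT0 ?gST ?yCs ?gCs ?orbT.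
Qed.

Lemma off_line_vert_contractible c : c \in Cs -> c \notin L -> vert_contractible E r c.
Proof.
move=> cCs cL; apply: NNPP => nc; have cE := subsetP cocircuit_subE _ cCs.
have xc : x != c by apply: contraNneq cL => <-; apply: mem_line_throughl.
have [S0 [T0 [Vc xS0]]] := not_vert_contractible_sep_with cE xE xc nc.
have [yT0 Csub] := off_line_sep_triad cCs cL Vc xS0.
have [cY cV] := off_line_sides cCs cL.
have Csub' : Cs \subset [set y; c; x].
  by apply: subset_trans Csub _; rewrite !subUset !sub1set !inE !eqxx !orbT.
have [w wH wline] := triad_line yCs cCs xCs Csub' (vert_sep_sym Vy) cV xU (vert_sep_sym Vc) yT0 xS0.
by have := vert_sep_triad_no_line xCs yCs cCs Csub Vx yX cY wH; rewrite ltnNge wline.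
Qed.

Lemma line_through_nontrivial : nontrivial_line E r L.
Proof.
apply: nontrivial_line_through xE yE xy _.
have [c cCs cL] := exists_off_line; have [cY cV] := off_line_sides cCs cL.
have [Csub|/subsetPn [g gCs]] := boolP (Cs \subset [set x; y; c]).
  have [w /setDP [wE wCs] wline] := triad_line xCs yCs cCs Csub Vx yX cY Vy xU cV.
  apply/card_gt2P; exists x, y, w; split; split => //.
  - exact: mem_line_throughl.
  - exact: mem_line_throughr.
  - by rewrite inE wE.
  - by apply: contraNneq wCs => <-.
  - by apply: contraNneq wCs => ->.
rewrite !inE => /norP [/norP [gx gy] gc].
have gL : g \in L by apply: contraNT gc => gL; rewrite (off_line_unique gCs gL cCs cL).
apply/card_gt2P; exists x, y, g; split; split; rewrite // 1?eq_sym //.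
- exact: mem_line_throughl.
- exact: mem_line_throughr.
Qed.

End TwoNonContractible.

Lemma cocircuit_noncontractible_line x y : x \in Cs -> y \in Cs -> x != y ->
  ~ vert_contractible E r x -> ~ vert_contractible E r y ->
  exists L, nontrivial_line E r L /\
    (forall z, z \in Cs -> ~ vert_contractible E r z -> z \in L).
Proof.
move=> xCs yCs xy nx ny.
have xE := subsetP cocircuit_subE _ xCs; have yE := subsetP cocircuit_subE _ yCs.
have yx : y != x by rewrite eq_sym.
have [X [Y [Vx yX]]] := not_vert_contractible_sep_with xE yE yx nx.
have [U [V [Vy xU]]] := not_vert_contractible_sep_with yE xE xy ny.
exists (line_through x y); split; first exact: line_through_nontrivial xCs yCs Vx yX Vy xU.
move=> z zCs nz; apply/negPn/negP => zL; apply: nz.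
exact (off_line_vert_contractible xCs yCs Vx yX Vy xU zCs zL).
Qed.

Lemma cocircuit_has_vert_contractible : exists z, z \in Cs /\ vert_contractible E r z.
Proof.
apply: NNPP => none.
have nvc z : z \in Cs -> ~ vert_contractible E r z by move=> zCs zvc; apply: none; exists z.
have [x [y [xCs yCs xy]]] := card_gt1P (ltnW card_cocircuit_gt2).
have [L [[[LE _] rL _] CsL]] :=
  cocircuit_noncontractible_line xCs yCs xy (nvc x xCs) (nvc y yCs).
have : Cs \subset L by apply/subsetP => z zCs; apply: CsL zCs (nvc z zCs).
by move/rk_mono/(_ LE); rewrite HC3 rL.
Qed.

End Cocircuit.
End ThreeConnected.
End Simple.
End Matroid.

Theorem proposition5p16 (T : finType) (E : {set T}) (r : {set T} -> nat) :
  is_matroid E r -> simple E r -> three_connected E r -> 3 <= r E ->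
  forall Cs : {set T}, cocircuit E r Cs -> r Cs = 3 ->
  ((exists x y, [/\ x \in Cs, y \in Cs, x != y,
                    ~ vert_contractible E r x & ~ vert_contractible E r y]) ->
   exists L, nontrivial_line E r L /\
     (forall z, z \in Cs -> ~ vert_contractible E r z -> z \in L)) /\
  (exists z, z \in Cs /\ vert_contractible E r z).
Proof.
move=> rM rS r3 _ Cs HC HC3; split; last exact: cocircuit_has_vert_contractible.
by move=> [x [y [xCs yCs xy nx ny]]]; apply: cocircuit_noncontractible_line nx ny.
Qed.
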